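(* Let $m\ge4$ and let $g(x_1,x_2,x_3)=a_1(cx_1+\alpha_1)^2+a_2(cx_2+\alpha_2)^2+a_3(cx_3+\alpha_3)^2$ be a tight regular complete quadratic polynomial where $a_1,a_2,a_3$ are positive integers with $\gcd(a_1,a_2,a_3)=1$ and $a_1\le a_2\le a_3$, the lattice $\langle a_1,a_2,a_3\rangle$ is $p$-stable for every prime $p\nmid c$, $\alpha_i\in\mathbb{Z}$ with $0<\alpha_i<c/2$ for $i=1,2,3$, and $\gcd(c,\alpha_1\alpha_2\alpha_3)=1$. For $n\in\mathbb{Z}_{\ge0}$ let $\beta(n)=\delta cn+a_1\alpha_1^2+a_2\alpha_2^2+a_3\alpha_3^2$. Then: (i) $\min(g)=a_1\alpha_1^2+a_2\alpha_2^2+a_3\alpha_3^2$; (ii) for every prime divisor $p$ of $c$ and every $n\in\mathbb{Z}_{\ge0}$, $\beta(n)$ is represented by $g$ over $\mathbb{Z}_p$; (iii) for every prime $p$ not dividing $c$ and every $n\in\mathbb{Z}_{\ge0}$, $\beta(n)$ is represented by $g$ over $\mathbb{Z}_p$ if and only if $\beta(n)$ is represented by the $\mathbb{Z}$-lattice $\langle a_1,a_2,a_3\rangle$ over $\mathbb{Z}_p$.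
   Context: Define $\delta=4$ if $m$ is odd, $\delta=2$ if $m\equiv2\pmod4$, $\delta=1$ if $m\equiv0\pmod4$, and $c=\delta\frac{m-2}{2}$. An integer $n$ is represented by $g$ over $R\in\{\mathbb{Z},\mathbb{Z}_p,\mathbb{R}\}$ if $g(\mathbf{x})=n$ for some $\mathbf{x}\in R^3$; locally represented means represented over every $\mathbb{Z}_p$ and over $\mathbb{R}$. $\min(g)=\min\{g(\mathbf{x}):\mathbf{x}\in\mathbb{Z}^3\}$; $g$ is tight regular if it represents over $\mathbb{Z}$ every locally represented integer $\ge\min(g)$. $\langle a_1,a_2,a_3\rangle$ is the lattice with form $a_1x_1^2+a_2x_2^2+a_3x_3^2$. For an odd prime $p$ with nonsquare unit $\Delta_p$, a diagonal ternary lattice $K$ is $p$-stable if $\langle1,-1\rangle$ is represented by $K\otimes\mathbb{Z}_p$ or $K\otimes\mathbb{Z}_p\cong\langle1,-\Delta_p\rangle\perp\langle p\epsilon\rangle$ with $\epsilon\in\mathbb{Z}_p^\times$; $K$ is $2$-stable if $K\otimes\mathbb{Z}_2$ is unimodular or $\langle1,3\rangle$ or $\langle1,7\rangle$ is represented by $K\otimes\mathbb{Z}_2$. *)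

From Stdlib Require Reals.
From HB Require Import structures.
From mathcomp Require Import all_boot all_order all_algebra.
From mathcomp Require Import Rstruct.
Set Implicit Arguments. Unset Strict Implicit. Unset Printing Implicit Defensive.
Import Order.TTheory GRing.Theory Num.Theory.
Local Open Scope ring_scope.

(* delta and c = delta (m-2)/2 (an exact division) *)
Definition delta (m : nat) : int :=
  if odd m then 4 else if (m %% 4 == 2)%N then 2 else 1.
Definition cc (m : nat) : int := ((delta m * (m%:Z - 2)) %/ 2)%Z.

Definition tpoly := forall R : comNzRingType, R -> R -> R -> R.

Definition gpol (c a1 a2 a3 al1 al2 al3 : int) : tpoly :=
  fun R x1 x2 x3 =>
    a1%:~R * (c%:~R * x1 + al1%:~R) ^+ 2 + a2%:~R * (c%:~R * x2 + al2%:~R) ^+ 2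
    + a3%:~R * (c%:~R * x3 + al3%:~R) ^+ 2.

(* the diagonal form of the lattice <a1,a2,a3> *)
Definition dform (a1 a2 a3 : int) : tpoly :=
  fun R x1 x2 x3 => a1%:~R * x1 ^+ 2 + a2%:~R * x2 ^+ 2 + a3%:~R * x3 ^+ 2.

(* ---- p-adic integers Z_p, as the inverse limit of Z/p^k Z ----
   An element of Z_p is a coherent sequence of integer representatives
   u k (taken modulo p^k); two such are equal iff they agree mod p^k for all k.
   A polynomial identity with integer coefficients holds in Z_p iff it holds
   levelwise on representatives modulo every p^k. *)
Record Zp (p : nat) := MkZp {
  zp_seq :> nat -> int;
  zp_coh : forall k : nat, (zp_seq k.+1 = zp_seq k %[mod (p ^ k)%:Z])%Z }.

Definition zp_unit (p : nat) (u : nat -> int) : Prop :=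
  exists w : Zp p, forall k : nat, (u k * w k = 1 %[mod (p ^ k)%:Z])%Z.

Definition zp_square (p : nat) (u : Zp p) : Prop :=
  exists y : Zp p, forall k : nat, (y k ^+ 2 = u k %[mod (p ^ k)%:Z])%Z.

Definition rep_Z (P : tpoly) (n : int) : Prop :=
  exists x1 x2 x3 : int, P _ x1 x2 x3 = n.

Definition rep_Zp (p : nat) (P : tpoly) (n : int) : Prop :=
  exists x1 x2 x3 : Zp p, forall k : nat,
    (P _ (x1 k) (x2 k) (x3 k) = n %[mod (p ^ k)%:Z])%Z.

Definition rep_R (P : tpoly) (n : int) : Prop :=
  exists x1 x2 x3 : Rdefinitions.R, P _ x1 x2 x3 = n%:~R.

Definition locally_rep (P : tpoly) (n : int) : Prop :=
  (forall p : nat, prime p -> rep_Zp p P n) /\ rep_R P n.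

Definition is_min (P : tpoly) (v : int) : Prop :=
  (exists x1 x2 x3 : int, P _ x1 x2 x3 = v) /\
  (forall x1 x2 x3 : int, v <= P _ x1 x2 x3).

Definition tight_regular (P : tpoly) : Prop :=
  exists v : int, is_min P v /\
    forall n : int, v <= n -> locally_rep P n -> rep_Z P n.

Definition vec (p : nat) := 'I_3 -> Zp p.

Definition bil (a1 a2 a3 : int) (p : nat) (v w : vec p) (k : nat) : int :=
  a1 * v ord0 k * w ord0 k + a2 * v (inord 1) k * w (inord 1) k
  + a3 * v (inord 2) k * w (inord 2) k.

(* the binary lattice <b1,b2> is represented by K (x) Z_p *)
Definition rep_binary (p : nat) (a1 a2 a3 b1 b2 : int) : Prop :=
  exists v w : vec p, forall k : nat,
    [/\ (bil a1 a2 a3 v v k = b1 %[mod (p ^ k)%:Z])%Z,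
        (bil a1 a2 a3 w w k = b2 %[mod (p ^ k)%:Z])%Z &
        (bil a1 a2 a3 v w k = 0 %[mod (p ^ k)%:Z])%Z].

Definition iso_special (p : nat) (a1 a2 a3 : int) (Delta eps : Zp p) : Prop :=
  exists e : 'I_3 -> vec p,
    zp_unit p (fun k => \det (\matrix_(i < 3, j < 3) e i j k)) /\
    forall (i j : 'I_3) (k : nat),
      (bil a1 a2 a3 (e i) (e j) k =
        (if i != j then 0
         else if i == ord0 then 1
         else if i == inord 1 then - Delta k
         else p%:Z * eps k) %[mod (p ^ k)%:Z])%Z.

(* unimodularity of K (x) Z_p: the Gram determinant a1 a2 a3 is a unit *)
Definition unimodular (p : nat) (a1 a2 a3 : int) : Prop :=
  zp_unit p (fun _ => a1 * a2 * a3).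

Definition p_stable (p : nat) (a1 a2 a3 : int) : Prop :=
  if p == 2%N then
    [\/ unimodular 2 a1 a2 a3, rep_binary 2 a1 a2 a3 1 3 | rep_binary 2 a1 a2 a3 1 7]
  else
    rep_binary p a1 a2 a3 1 (-1) \/
    exists Delta eps : Zp p,
      [/\ zp_unit p Delta, ~ zp_square Delta, zp_unit p eps &
          iso_special a1 a2 a3 Delta eps].

(* (i) Since 0 < al < c/2, every shifted value c x + al with x <> 0 has absolute
   value at least c - al > al, so each square is minimised at x = 0.
   (ii) If p | c, then p does not divide the al_i, and some a_i is prime to p
   because gcd(a1, a2, a3) = 1.  Solving a_i (c x + al_i)^2 = a_i al_i^2 + delta c n
   amounts, after removing the factor c (and, for p = 2, a further factor 4), to a
   quadratic equation whose linear coefficient is a p-adic unit and whose quadratic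
   coefficient is divisible by p; Hensel lifting solves it in Z_p.
   (iii) If p does not divide c, then x |-> c x + al is a bijection of Z_p, so g and
   <a1, a2, a3> represent the same p-adic integers. *)
From Pilot Require Import Defs.
From HB Require Import structures.
From mathcomp Require Import all_boot all_order all_algebra.
From mathcomp Require Import zify ring.
Set Implicit Arguments. Unset Strict Implicit. Unset Printing Implicit Defensive.
Import Order.TTheory GRing.Theory Num.Theory.
Local Open Scope ring_scope.

Lemma eqz_mod_diff (d a b a' b' : int) :
  a - b = a' - b' -> (a' = b' %[mod d])%Z -> (a = b %[mod d])%Z.
Proof. by move=> e /eqP; rewrite eqz_mod_dvd -e -eqz_mod_dvd => /eqP. Qed.

Lemma prime_coprimez (p : nat) (x : int) :
  prime p -> coprimez p%:Z x = ~~ (p%:Z %| x)%Z.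
Proof. by move=> pp; rewrite coprimezE prime_coprime. Qed.

Lemma sqr_shift_ge (c al x : int) :
  0 < al -> 2 * al < c -> al ^+ 2 <= (c * x + al) ^+ 2.
Proof.
move=> al_gt0 al_lt; rewrite !expr2.
have [->|[x_ge1|x_le]] : x = 0 \/ 1 <= x \/ x <= -1 by lia.
- by rewrite mulr0 add0r.
- have : c <= c * x by nia.
  nia.
- have : c * x <= - c by nia.
  nia.
Qed.

Section ZpArith.
Variable p : nat.

Definition zp_const (a : int) : Defs.Zp p := @MkZp p (fun _ => a) (fun _ => erefl).

Lemma zp_add_coh (x y : Defs.Zp p) (k : nat) :
  (x k.+1 + y k.+1 = x k + y k %[mod (p ^ k)%:Z])%Z.
Proof. by rewrite -modzDm (zp_coh x) (zp_coh y) modzDm. Qed.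

Definition zp_add (x y : Defs.Zp p) : Defs.Zp p := MkZp (zp_add_coh x y).

Lemma zp_mul_coh (x y : Defs.Zp p) (k : nat) :
  (x k.+1 * y k.+1 = x k * y k %[mod (p ^ k)%:Z])%Z.
Proof. by rewrite -modzMm (zp_coh x) (zp_coh y) modzMm. Qed.

Definition zp_mul (x y : Defs.Zp p) : Defs.Zp p := MkZp (zp_mul_coh x y).

End ZpArith.

Section HenselQuadratic.
Variables (p : nat) (A B N : int).
Hypotheses (pA : (p%:Z %| A)%Z) (coB : coprimez p%:Z B).

Let f (t : int) := A * t ^+ 2 + B * t - N.

(* Newton's iteration, with u an inverse of B mod p standing in for 1 / f'(t):
   as p | A, f'(t) = 2 A t + B is congruent to B mod p. *)
Fixpoint newton (u : int) (k : nat) : int :=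
  if k is k'.+1 then newton u k' - u * f (newton u k') else 0.

Lemma newton_root (u : int) (k : nat) :
  (p%:Z %| 1 - u * B)%Z -> ((p ^ k)%:Z %| f (newton u k))%Z.
Proof.
move=> pu; elim: k => [|k IHk] /=; first exact: dvd1z.
set t := newton u k.
have -> : f (t - u * f t) = f t * ((1 - u * B) - A * u * (2 * t - u * f t)).
  by rewrite /f; ring.
rewrite expnSr PoszM; apply: dvdz_mul => //.
by rewrite rpredB // -mulrA dvdz_mulr.
Qed.

Lemma quadratic_Zp_root :
  exists t : Defs.Zp p, forall k, ((p ^ k)%:Z %| A * t k ^+ 2 + B * t k - N)%Z.
Proof.
have [[v u] /= Buv] := coprimezP _ _ coB.
have pu : (p%:Z %| 1 - u * B)%Z by rewrite -Buv addrK dvdz_mull.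
have coh k : (newton u k.+1 = newton u k %[mod (p ^ k)%:Z])%Z.
  apply/eqP; rewrite eqz_mod_dvd /= addrAC subrr add0r rpredN.
  exact/dvdz_mull/newton_root.
by exists (MkZp coh) => k; apply: newton_root.
Qed.

End HenselQuadratic.

Lemma Zp_inverse (p : nat) (c : int) : coprimez p%:Z c ->
  exists w : Defs.Zp p, forall k, (c * w k = 1 %[mod (p ^ k)%:Z])%Z.
Proof.
move=> coc; have [w hw] := quadratic_Zp_root 1 (dvdz0 p%:Z) coc.
exists w => k; apply/eqP; rewrite eqz_mod_dvd.
by have := hw k; rewrite mul0r add0r.
Qed.

Lemma shifted_square_Zp (p : nat) (a c al N : int) :
  (p%:Z %| c)%Z -> coprimez p%:Z (2 * a * al) ->
  exists x : Defs.Zp p, forall k,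
    (a * (c * x k + al) ^+ 2 = a * al ^+ 2 + c * N %[mod (p ^ k)%:Z])%Z.
Proof.
move=> pc co; have [x hx] := quadratic_Zp_root N (dvdz_mull a pc) co.
exists x => k; apply/eqP; rewrite eqz_mod_dvd.
have -> : a * (c * x k + al) ^+ 2 - (a * al ^+ 2 + c * N)
        = c * (a * c * x k ^+ 2 + 2 * a * al * x k - N) by ring.
exact/dvdz_mull/hx.
Qed.

Lemma shifted_square_Zp_even (p : nat) (a b al N : int) :
  (p%:Z %| a * b)%Z -> coprimez p%:Z (a * al) ->
  exists x : Defs.Zp p, forall k,
    (a * (2 * b * x k + al) ^+ 2 = a * al ^+ 2 + 4 * b * N %[mod (p ^ k)%:Z])%Z.
Proof.
move=> pab co; have [x hx] := quadratic_Zp_root N pab co.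
exists x => k; apply/eqP; rewrite eqz_mod_dvd.
have -> : a * (2 * b * x k + al) ^+ 2 - (a * al ^+ 2 + 4 * b * N)
        = 4 * b * (a * b * x k ^+ 2 + a * al * x k - N) by ring.
exact/dvdz_mull/hx.
Qed.

Lemma gpolE (c a1 a2 a3 al1 al2 al3 : int) (R : comNzRingType) (x1 x2 x3 : R) :
  gpol c a1 a2 a3 al1 al2 al3 x1 x2 x3 =
  dform a1 a2 a3 (c%:~R * x1 + al1%:~R) (c%:~R * x2 + al2%:~R) (c%:~R * x3 + al3%:~R).
Proof. by []. Qed.

Lemma dform_mod (d a1 a2 a3 u1 u2 u3 v1 v2 v3 : int) :
  (u1 = v1 %[mod d])%Z -> (u2 = v2 %[mod d])%Z -> (u3 = v3 %[mod d])%Z ->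
  (dform a1 a2 a3 u1 u2 u3 = dform a1 a2 a3 v1 v2 v3 %[mod d])%Z.
Proof.
move=> /eqP + /eqP + /eqP; rewrite !eqz_mod_dvd => h1 h2 h3.
apply/eqP; rewrite eqz_mod_dvd /dform !intz.
have -> : a1 * u1 ^+ 2 + a2 * u2 ^+ 2 + a3 * u3 ^+ 2
          - (a1 * v1 ^+ 2 + a2 * v2 ^+ 2 + a3 * v3 ^+ 2)
  = a1 * (u1 + v1) * (u1 - v1) + a2 * (u2 + v2) * (u2 - v2)
    + a3 * (u3 + v3) * (u3 - v3) by ring.
by rewrite !rpredD ?dvdz_mull.
Qed.

Lemma is_min_gpol (c a1 a2 a3 al1 al2 al3 : int) :
  0 <= a1 -> 0 <= a2 -> 0 <= a3 ->
  0 < al1 -> 2 * al1 < c -> 0 < al2 -> 2 * al2 < c -> 0 < al3 -> 2 * al3 < c ->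
  is_min (gpol c a1 a2 a3 al1 al2 al3) (a1 * al1 ^+ 2 + a2 * al2 ^+ 2 + a3 * al3 ^+ 2).
Proof.
move=> a1_ge0 a2_ge0 a3_ge0 al1_gt0 al1_lt al2_gt0 al2_lt al3_gt0 al3_lt.
split=> [|x1 x2 x3]; first by exists 0, 0, 0; rewrite /gpol !intz !mulr0 !add0r.
by rewrite /gpol !intz !lerD ?ler_wpM2l ?sqr_shift_ge.
Qed.

Lemma delta_cc_even (m : nat) : (4 <= m)%N -> (2 %| cc m)%Z ->
  delta m = 4 \/ delta m = 2 /\ (4 %| cc m)%Z.
Proof.
rewrite /cc /delta => m4; case: ifP => [|/negbT m_even]; first by left.
have {m_even} : (m %% 2 = 0)%N by rewrite modn2 (negbTE m_even).
by case: ifP; lia.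
Qed.

Lemma cc_shifted_square (m p : nat) (a al n : int) :
  (4 <= m)%N -> prime p -> (p%:Z %| cc m)%Z ->
  coprimez p%:Z a -> coprimez p%:Z al ->
  exists x : Defs.Zp p, forall k,
    (a * (cc m * x k + al) ^+ 2 = a * al ^+ 2 + delta m * cc m * n %[mod (p ^ k)%:Z])%Z.
Proof.
move=> m4 pp pc coa coal.
have co : coprimez p%:Z (a * al) by rewrite coprimezMr coa.
have [p2|p_neq2] := eqVneq p 2%N.
  move: pc co; rewrite p2 => pc co.
  have [d4 | [d2 c4]] := delta_cc_even m4 pc.
    have [x hx] := shifted_square_Zp_even n (dvdz_mull a pc) co.
    exists (zp_mul (zp_const 2 2) x) => k.
    by apply: eqz_mod_diff (hx k); rewrite d4 /=; ring.
  have [b [cb b_even]] : exists b, cc m = 2 * b /\ (2 %| b)%Z.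
    by exists (cc m %/ 2)%Z; lia.
  have [x hx] := shifted_square_Zp_even n (dvdz_mull a b_even) co.
  by exists x => k; apply: eqz_mod_diff (hx k); rewrite d2 cb; ring.
have co2 : coprimez p%:Z 2 by rewrite prime_coprimez // dvdzE dvdn_prime2.
have co2a : coprimez p%:Z (2 * a * al) by rewrite -mulrA coprimezMr co2.
have [x hx] := shifted_square_Zp (delta m * n) pc co2a.
by exists x => k; apply: eqz_mod_diff (hx k); ring.
Qed.

Lemma rep_Zp_gpol_beta (m p : nat) (a1 a2 a3 al1 al2 al3 n : int) :
  (4 <= m)%N -> prime p -> (p%:Z %| cc m)%Z ->
  gcdz (gcdz a1 a2) a3 = 1 -> gcdz (cc m) (al1 * al2 * al3) = 1 ->
  rep_Zp p (gpol (cc m) a1 a2 a3 al1 al2 al3)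
    (delta m * cc m * n + (a1 * al1 ^+ 2 + a2 * al2 ^+ 2 + a3 * al3 ^+ 2)).
Proof.
move=> m4 pp pc a_coprime al_coprime.
have : coprimez p%:Z (al1 * al2 * al3).
  by apply: coprimez_dvdl pc _; apply/eqP.
rewrite !coprimezMr => /andP[/andP[co1 co2] co3].
have : ~~ [&& p%:Z %| a1, p%:Z %| a2 & p%:Z %| a3]%Z.
  by rewrite andbA -!dvdz_gcd a_coprime dvdz1 /=; case: (p) pp => [|[]].
rewrite !negb_and -!prime_coprimez // => /or3P[coa | coa | coa].
- have [x hx] := cc_shifted_square n m4 pp pc coa co1.
  exists x, (zp_const p 0), (zp_const p 0) => k.
  by apply: eqz_mod_diff (hx k); rewrite /gpol /= !intz; ring.
- have [x hx] := cc_shifted_square n m4 pp pc coa co2.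
  exists (zp_const p 0), x, (zp_const p 0) => k.
  by apply: eqz_mod_diff (hx k); rewrite /gpol /= !intz; ring.
- have [x hx] := cc_shifted_square n m4 pp pc coa co3.
  exists (zp_const p 0), (zp_const p 0), x => k.
  by apply: eqz_mod_diff (hx k); rewrite /gpol /= !intz; ring.
Qed.

Lemma rep_Zp_gpol_dform (p : nat) (c a1 a2 a3 al1 al2 al3 n : int) :
  coprimez p%:Z c ->
  rep_Zp p (gpol c a1 a2 a3 al1 al2 al3) n <-> rep_Zp p (dform a1 a2 a3) n.
Proof.
move=> coc; split=> [[x1 [x2 [x3 hx]]] | [y1 [y2 [y3 hy]]]].
  pose shift x al := zp_add (zp_mul (zp_const p c) x) (zp_const p al).
  exists (shift x1 al1), (shift x2 al2), (shift x3 al3) => k.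
  by rewrite -(hx k) gpolE !intz.
have [w hw] := Zp_inverse coc.
pose unshift y al := zp_mul w (zp_add y (zp_const p (- al))).
have unshiftK y al k : (c * unshift y al k + al = y k %[mod (p ^ k)%:Z])%Z.
  apply/eqP; rewrite eqz_mod_dvd /=.
  have -> : c * (w k * (y k + - al)) + al - y k = (c * w k - 1) * (y k - al) by ring.
  by rewrite dvdz_mulr // -eqz_mod_dvd (hw k).
exists (unshift y1 al1), (unshift y2 al2), (unshift y3 al3) => k.
by rewrite -(hy k) gpolE !intz; apply: dform_mod; apply: unshiftK.
Qed.

Theorem lemma3p4 (m : nat) (a1 a2 a3 al1 al2 al3 : int) :
  (4 <= m)%N ->
  0 < a1 -> 0 < a2 -> 0 < a3 -> a1 <= a2 -> a2 <= a3 ->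
  gcdz (gcdz a1 a2) a3 = 1 ->
  (forall p : nat, prime p -> ~~ (p%:Z %| cc m)%Z -> p_stable p a1 a2 a3) ->
  0 < al1 -> 2 * al1 < cc m ->
  0 < al2 -> 2 * al2 < cc m ->
  0 < al3 -> 2 * al3 < cc m ->
  gcdz (cc m) (al1 * al2 * al3) = 1 ->
  tight_regular (gpol (cc m) a1 a2 a3 al1 al2 al3) ->
  let g := gpol (cc m) a1 a2 a3 al1 al2 al3 in
  let A := a1 * al1 ^+ 2 + a2 * al2 ^+ 2 + a3 * al3 ^+ 2 in
  let beta (n : nat) := delta m * cc m * n%:Z + A in
  [/\ is_min g A,
      (forall p : nat, prime p -> (p%:Z %| cc m)%Z ->
         forall n : nat, rep_Zp p g (beta n)) &
      (forall p : nat, prime p -> ~~ (p%:Z %| cc m)%Z ->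
         forall n : nat, rep_Zp p g (beta n) <-> rep_Zp p (dform a1 a2 a3) (beta n))].
Proof.
move=> m4 a1_gt0 a2_gt0 a3_gt0 _ _ a_coprime _ al1_gt0 al1_lt al2_gt0 al2_lt
  al3_gt0 al3_lt al_coprime _ g A beta.
split.
- by apply: is_min_gpol; rewrite ?ltW.
- by move=> p pp pc n; apply: rep_Zp_gpol_beta.
- by move=> p pp pc n; apply: rep_Zp_gpol_dform; rewrite prime_coprimez.
Qed.
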